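(* Let $\mathcal{B}=\{x\in\mathbb{R}^d:\|x\|_2\le R\}$ and $g_1,\dots,g_m$ convex differentiable with $\mathcal{K}=\{x:g_i(x)\le0,\ i=1,\dots,m\}\subseteq\mathcal{B}$ nonempty. Let $f_1,\dots,f_T$ be convex differentiable, and assume for all $x,y\in\mathcal{B}$, $t$, $i$: $\|\nabla f_t(x)\|\le G$, $\|\nabla g_i(x)\|\le G$, $|g_i(x)|\le D$, and $f_t(x)-f_t(y)\le F$. Define $\mathcal{L}_t(x,\lambda)=f_t(x)+\sum_{i=1}^m\bigl(\lambda_ig_i(x)-\frac{\delta\eta}{2}\lambda_i^2\bigr)$ for $\lambda\in\mathbb{R}^m_+$, and run $x_1=0$, $\lambda_1=0$, $$x_{t+1}=\Pi_{\mathcal{B}}\bigl(x_t-\eta\nabla_x\mathcal{L}_t(x_t,\lambda_t)\bigr),\qquad \lambda_{t+1}=\Pi_{[0,\infty)^m}\bigl(\lambda_t+\eta\nabla_\lambda\mathcal{L}_t(x_t,\lambda_t)\bigr).$$ Let $a=R\sqrt{(m+1)G^2+2mD^2}$ and $\eta=R^2/(a\sqrt T)$; assume $T$ is large enough that $2\sqrt2\eta(m+1)\le1$, and choose $\delta>0$ with $\delta\ge(m+1)G^2+2m\delta^2\eta^2$. Then for $x_*=\arg\min_{x\in\mathcal{K}}\sum_{t=1}^Tf_t(x)$, $$\sum_{t=1}^T\bigl(f_t(x_t)-f_t(x_* )\bigr)\le a\sqrt T,\qquad \sum_{t=1}^Tg_i(x_t)\le\sqrt{2\bigl(FT+a\sqrt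 T\bigr)\sqrt T\Bigl(\frac{\delta R^2}{a}+\frac{ma}{R^2}\Bigr)}\quad(i=1,\dots,m).$$
   Context: $\Pi_S$ is Euclidean projection onto $S$; $x_t$ is chosen before $f_t$ is revealed. The iterates need not lie in $\mathcal{K}$; the second bound is the long-term violation of the constraints, which is $O(T^{3/4})$, while the regret is $O(\sqrt T)$. *)

From HB Require Import structures.
From Stdlib Require Import Reals.
From mathcomp Require Import all_boot.
Set Implicit Arguments.
Unset Strict Implicit.
Unset Printing Implicit Defensive.

Open Scope R_scope.

HB.instance Definition _ :=
  Monoid.isComLaw.Build R 0 Rplus
    (fun a b c => esym (Rplus_assoc a b c)) Rplus_comm Rplus_0_l.

Definition vec (n : nat) := 'I_n -> R.

Definition vzero (n : nat) : vec n := fun _ => 0.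
Definition vadd (n : nat) (x y : vec n) : vec n := fun i => x i + y i.
Definition vsub (n : nat) (x y : vec n) : vec n := fun i => x i - y i.
Definition vscale (n : nat) (c : R) (x : vec n) : vec n := fun i => c * x i.

Definition dot (n : nat) (x y : vec n) : R := \big[Rplus/0]_(i < n) (x i * y i).
Definition norm2 (n : nat) (x : vec n) : R := sqrt (dot x x).

Definition ball (n : nat) (r : R) (x : vec n) : Prop := norm2 x <= r.
Definition orthant (n : nat) (x : vec n) : Prop := forall i, 0 <= x i.

Definition is_proj (n : nat) (S : vec n -> Prop) (y p : vec n) : Prop :=
  S p /\ forall z, S z -> norm2 (vsub y p) <= norm2 (vsub y z).

Definition convex (n : nat) (h : vec n -> R) : Prop :=
  forall (x y : vec n) (s : R), 0 <= s <= 1 ->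
    h (vadd (vscale s x) (vscale (1 - s) y)) <= s * h x + (1 - s) * h y.

Definition is_gradient (n : nat) (h : vec n -> R) (x g : vec n) : Prop :=
  forall eps, 0 < eps -> exists del, 0 < del /\
    forall y : vec n, norm2 (vsub y x) < del ->
      Rabs (h y - h x - dot g (vsub y x)) <= eps * norm2 (vsub y x).

Definition sumT (T : nat) (u : nat -> R) : R := \big[Rplus/0]_(1 <= t < T.+1) u t.

(* Each step of the method is a projected gradient step, descent in x and ascent
   in lambda, on the regularized Lagrangian L_t, which is convex in x and concave
   in lambda.  Since projections onto convex sets are non-expansive towards points
   of the set, for every feasible z and every mu >= 0
     2 eta (L_t(x_t, mu) - L_t(z, lambda_t))
       <= |x_t - z|^2 + |lambda_t - mu|^2 - |x_(t+1) - z|^2 - |lambda_(t+1) - mu|^2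
          + eta^2 (|grad_x L_t|^2 + |grad_lambda L_t|^2).
   The gradients are at most eta^2 ((m+1) G^2 + 2 m D^2) + delta eta^2 |lambda_t|^2
   by the choice of delta, and the last term is absorbed by the regularization
   -(delta eta / 2) |lambda_t|^2 in L_t(z, lambda_t).  Telescoping over t, mu = 0
   gives the regret bound; mu = M e_i gives a quadratic inequality in M whose
   optimization bounds the square of the cumulative violation of constraint i. *)
From HB Require Import structures.
From Stdlib Require Import Reals Lra.
From mathcomp Require Import all_boot zify.
Open Scope R_scope.
Set Implicit Arguments.
Unset Strict Implicit.

HB.instance Definition _ := Monoid.isMulLaw.Build R 0 Rmult Rmult_0_l Rmult_0_r.
HB.instance Definition _ :=
  Monoid.isAddLaw.Build R Rmult Rplus Rmult_plus_distr_r Rmult_plus_distr_l.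

Lemma big_Rle (I : Type) (r : seq I) (P : pred I) (F G : I -> R) :
  (forall i, P i -> F i <= G i) ->
  \big[Rplus/0]_(i <- r | P i) F i <= \big[Rplus/0]_(i <- r | P i) G i.
Proof. by move=> FG; apply: (big_ind2 (fun u v => u <= v)) => // *; lra. Qed.

Lemma big_Rge0 (I : Type) (r : seq I) (P : pred I) (F : I -> R) :
  (forall i, P i -> 0 <= F i) -> 0 <= \big[Rplus/0]_(i <- r | P i) F i.
Proof. by move=> F0; apply: (big_ind (fun u => 0 <= u)) => // *; lra. Qed.

Lemma big_Rlincomb3 n (F G H : 'I_n -> R) a b c :
  \big[Rplus/0]_(i < n) (a * F i + b * G i + c * H i)
  = a * \big[Rplus/0]_(i < n) F i + b * \big[Rplus/0]_(i < n) G i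
    + c * \big[Rplus/0]_(i < n) H i.
Proof. by rewrite !big_split /= !big_distrr. Qed.

Lemma big_Rconst n (c : R) : \big[Rplus/0]_(i < n) c = INR n * c.
Proof.
elim: n => [|n IHn]; first by rewrite big_ord0 /=; ring.
by rewrite big_ord_recr IHn S_INR /=; ring.
Qed.

Lemma sumT0 (u : nat -> R) : sumT 0 u = 0.
Proof. by rewrite /sumT big_geq. Qed.

Lemma sumT_recr n (u : nat -> R) : sumT n.+1 u = sumT n u + u n.+1.
Proof. by rewrite /sumT big_nat_recr. Qed.

Lemma sumT_ge n (u : nat -> R) c :
  (forall t, (1 <= t <= n)%nat -> c <= u t) -> INR n * c <= sumT n u.
Proof.
elim: n => [|n IHn] uc; first by rewrite sumT0 /=; lra.
rewrite sumT_recr S_INR.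
have := IHn (fun t tn => uc t ltac:(lia)); have := uc n.+1 ltac:(lia); lra.
Qed.

Definition sqnorm n (v : vec n) : R := dot v v.

Lemma sqnorm_ge0 n (v : vec n) : 0 <= sqnorm v.
Proof. by apply: big_Rge0 => k _; apply: Rle_0_sqr. Qed.

Lemma sqnorm0 n : sqnorm (@vzero n) = 0.
Proof. by rewrite /sqnorm /dot big1 // => k _; rewrite /vzero; ring. Qed.

Lemma sqnorm_vsub0l n (v : vec n) : sqnorm (vsub (@vzero n) v) = sqnorm v.
Proof. by apply: eq_bigr => k _; rewrite /vsub /vzero; ring. Qed.

Lemma sqnorm_le_norm2 n (u v : vec n) : norm2 u <= norm2 v -> sqnorm u <= sqnorm v.
Proof. exact: sqrt_le_0 (sqnorm_ge0 u) (sqnorm_ge0 v). Qed.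

Lemma sqnorm_le_of_norm2 n (v : vec n) c : norm2 v <= c -> sqnorm v <= c ^ 2 /\ 0 <= c.
Proof.
move=> vc; have := sqrt_pos (sqnorm v); have := sqrt_sqrt _ (sqnorm_ge0 v).
rewrite /norm2 -/(sqnorm v) in vc; split; nra.
Qed.

Lemma ball_of_sqnorm n r (v : vec n) : 0 <= r -> sqnorm v <= r ^ 2 -> ball r v.
Proof. by move=> r0 vr; rewrite /ball /norm2 -(sqrt_pow2 r r0); apply: sqrt_le_1_alt. Qed.

Lemma dot_vsubC n (u v w : vec n) : dot u (vsub v w) = - dot u (vsub w v).
Proof.
suff : dot u (vsub v w) + dot u (vsub w v) = 0 by lra.
by rewrite /dot -big_split big1 // => k _; rewrite /vsub /=; ring.
Qed.

Lemma dot_lincomb n m (a : vec n) (l : 'I_m -> R) (b : 'I_m -> vec n) (w : vec n) :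
  dot (fun k => a k + \big[Rplus/0]_(i < m) (l i * b i k)) w
  = dot a w + \big[Rplus/0]_(i < m) (l i * dot (b i) w).
Proof.
rewrite /dot; under [X in _ = _ + X]eq_bigr => i _ do rewrite big_distrr /=.
rewrite exchange_big /= -big_split /=; apply: eq_bigr => k _; rewrite Rmult_plus_distr_r big_distrl /=.
by congr (_ + _); apply: eq_bigr => i _; ring.
Qed.

Definition convex_set n (S : vec n -> Prop) : Prop :=
  forall p z, S p -> S z -> forall s, 0 < s <= 1 -> S (fun k => p k + s * (z k - p k)).

Lemma ball_convex n r : convex_set (@ball n r).
Proof.
move=> p z /sqnorm_le_of_norm2 [pr r0] /sqnorm_le_of_norm2 [zr _] s s01.
apply: ball_of_sqnorm => //.
have -> : sqnorm (fun k => p k + s * (z k - p k))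
    = (1 - s) ^ 2 * sqnorm p + (2 * s * (1 - s)) * dot p z + s ^ 2 * sqnorm z.
  by rewrite /sqnorm /dot -big_Rlincomb3; apply: eq_bigr => k _; ring.
have cross : 2 * dot p z <= sqnorm p + sqnorm z.
  have := sqnorm_ge0 (vsub p z).
  rewrite [sqnorm (vsub p z)](_ : _ = 1 * sqnorm p + (-2) * dot p z + 1 * sqnorm z); first lra.
  by rewrite /sqnorm /dot -big_Rlincomb3; apply: eq_bigr => k _; rewrite /vsub; ring.
have : 0 <= s * (1 - s) by nra.
nra.
Qed.

Lemma orthant_convex n : convex_set (@orthant n).
Proof. by move=> p z p0 z0 s s01 k; have := p0 k; have := z0 k; nra. Qed.

Lemma Rle0_of_le_mul_small (b c : R) :
  0 <= c -> (forall s, 0 < s <= 1 -> 2 * b <= s * c) -> b <= 0.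
Proof.
move=> c0 bc; case: (Rle_lt_dec b 0) => // b0.
set s := b / (b + c).
have s_def : s * (b + c) = b by rewrite /s; field; lra.
have s0 : 0 < s by apply: Rdiv_lt_0_compat; lra.
have s1 : s <= 1 by nra.
have := bc s (conj s0 s1); nra.
Qed.

Lemma proj_obtuse n (S : vec n -> Prop) y p z :
  convex_set S -> is_proj S y p -> S z -> dot (vsub y p) (vsub z p) <= 0.
Proof.
move=> convS [Sp pmin] Sz.
apply: (Rle0_of_le_mul_small (sqnorm_ge0 (vsub z p))) => s s01.
have := sqnorm_le_norm2 (pmin _ (convS _ _ Sp Sz s s01)).
rewrite [X in _ <= X -> _](_ : _ = 1 * sqnorm (vsub y p)
    + (-2 * s) * dot (vsub y p) (vsub z p) + s ^ 2 * sqnorm (vsub z p)).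
  by move=> h; apply: (Rmult_le_reg_l s); nra.
by rewrite /sqnorm /dot -big_Rlincomb3; apply: eq_bigr => k _; rewrite /vsub; ring.
Qed.

Lemma proj_sqdist_le n (S : vec n -> Prop) y p z :
  convex_set S -> is_proj S y p -> S z -> sqnorm (vsub p z) <= sqnorm (vsub y z).
Proof.
move=> convS projp Sz; have := proj_obtuse convS projp Sz.
rewrite [sqnorm (vsub y z)](_ : _ = 1 * sqnorm (vsub y p)
    + (-2) * dot (vsub y p) (vsub z p) + 1 * sqnorm (vsub p z)).
  by have := sqnorm_ge0 (vsub y p); lra.
by rewrite /sqnorm /dot -big_Rlincomb3; apply: eq_bigr => k _; rewrite /vsub; ring.
Qed.

Lemma convex_gradient_le n (h : vec n -> R) (x z gx : vec n) :
  convex h -> is_gradient h x gx -> dot gx (vsub z x) <= h z - h x.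
Proof.
(* On the chord y = s z + (1 - s) x, convexity bounds h y - h x above by s (h z - h x)
   and differentiability bounds it below by s (q - e N); divide by s. *)
move=> convh gradh.
set q := dot gx (vsub z x); set N := norm2 (vsub z x).
have N0 : 0 <= N by apply: sqrt_pos.
apply: Rle_plus_epsilon => eps eps0.
set e := eps / (N + 1).
have e0 : 0 < e by apply: Rdiv_lt_0_compat; lra.
have eN : e * N <= eps.
  have : e * (N + 1) = eps by rewrite /e; field; lra.
  lra.
have [del [del0 hdel]] := gradh e e0.
set s := Rmin 1 (del / (N + 1)).
have s0 : 0 < s by apply: Rmin_pos; [lra | apply: Rdiv_lt_0_compat; lra].
have s1 : s <= 1 := Rmin_l _ _.
have sN : s * N < del.
  have : s * (N + 1) <= del / (N + 1) * (N + 1) by apply: Rmult_le_compat_r; [lra | apply: Rmin_r].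
  have : del / (N + 1) * (N + 1) = del by field; lra.
  nra.
set y := vadd (vscale s z) (vscale (1 - s) x).
have dist_yx : norm2 (vsub y x) = s * N.
  rewrite /norm2 [dot _ _](_ : _ = s ^ 2 * sqnorm (vsub z x)).
    by rewrite sqrt_mult ?sqrt_pow2 //; [lra | nra | apply: sqnorm_ge0].
  by rewrite /sqnorm /dot big_distrr /=; apply: eq_bigr => k _; rewrite /vsub /y /vadd /vscale; ring.
have slope_yx : dot gx (vsub y x) = s * q.
  by rewrite /q /dot big_distrr /=; apply: eq_bigr => k _; rewrite /vsub /y /vadd /vscale; ring.
have := hdel y; rewrite dist_yx slope_yx => /(_ sN) err.
have lower : s * q - e * (s * N) <= h y - h x.
  by have := Rle_abs (- (h y - h x - s * q)); rewrite Rabs_Ropp; lra.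
have upper : h y <= s * h z + (1 - s) * h x := convh z x s (conj (Rlt_le _ _ s0) s1).
have : s * (q - e * N) <= s * (h z - h x) by lra.
move/(Rmult_le_reg_l _ _ _ s0); lra.
Qed.

Lemma sqr_add_sum_le n (a : R) (y : 'I_n -> R) :
  (a + \big[Rplus/0]_(i < n) y i) * (a + \big[Rplus/0]_(i < n) y i)
  <= (INR n + 1) * (a * a + \big[Rplus/0]_(i < n) (y i * y i)).
Proof.
elim: n y => [|n IHn] y; first by rewrite !big_ord0 /=; lra.
rewrite !big_ord_recr S_INR /=.
move: (IHn (fun i => y (widen_ord (leqnSn n) i))) (pos_INR n).
move: (INR n) (\big[Rplus/0]_(i < n) y _) (\big[Rplus/0]_(i < n) (y _ * y _)) (y ord_max).
move=> c W P z IH c0.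
have := Rle_0_sqr (a + W - (c + 1) * z); rewrite /Rsqr => sq0.
have := Rmult_le_compat_l (c + 1 + 1) _ _ ltac:(lra) IH => IH'.
apply: (Rmult_le_reg_l (c + 1)); nra.
Qed.

Lemma sqnorm_lincomb_le n m (a : vec n) (l : 'I_m -> R) (b : 'I_m -> vec n) (G : R) :
  sqnorm a <= G ^ 2 -> (forall i, sqnorm (b i) <= G ^ 2) ->
  sqnorm (fun k => a k + \big[Rplus/0]_(i < m) (l i * b i k))
  <= (INR m + 1) * G ^ 2 * (1 + sqnorm l).
Proof.
move=> aG bG; rewrite {1}/sqnorm /dot.
apply: Rle_trans; first by apply: big_Rle => k _; apply: sqr_add_sum_le.
rewrite -big_distrr /= big_split /= exchange_big /=.
have weights : \big[Rplus/0]_(i < m) \big[Rplus/0]_(k < n) (l i * b i k * (l i * b i k))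
    <= G ^ 2 * sqnorm l.
  rewrite /sqnorm /dot big_distrr /=; apply: big_Rle => i _.
  rewrite [X in X <= _](_ : _ = l i * l i * sqnorm (b i)).
    by have := bG i; have := Rle_0_sqr (l i); rewrite /Rsqr; nra.
  by rewrite /sqnorm /dot big_distrr /=; apply: eq_bigr => k _; ring.
rewrite /sqnorm /dot in aG weights *.
apply: (Rle_trans _ ((INR m + 1) * (G ^ 2 + G ^ 2 * \big[Rplus/0]_(i < m) (l i * l i)))).
  by apply: Rmult_le_compat_l; [have := pos_INR m; lra | apply: Rplus_le_compat].
by right; ring.
Qed.

Lemma sqnorm_sub_scale_le m (c l : vec m) (e D : R) :
  (forall i, Rabs (c i) <= D) ->
  sqnorm (fun i => c i - e * l i) <= 2 * INR m * D ^ 2 + 2 * e ^ 2 * sqnorm l.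
Proof.
move=> cD; rewrite /sqnorm /dot.
apply: (Rle_trans _ (\big[Rplus/0]_(i < m) (2 * D ^ 2 + 2 * e ^ 2 * (l i * l i)))).
  apply: big_Rle => i _; have := Rle_0_sqr (c i + e * l i); rewrite /Rsqr.
  have : c i * c i <= D ^ 2.
    by have := cD i; have := Rabs_pos (c i); have := Rsqr_abs (c i); rewrite /Rsqr => ->; nra.
  nra.
by right; rewrite big_split /= big_Rconst -big_distrr /=; ring.
Qed.

Lemma sqr_le_of_quadratic_le (c E S B : R) :
  0 < c -> 0 < E -> 0 <= S ->
  (forall M, 0 <= M -> 2 * c * M * S - E * (M * M) <= 2 * c * B) ->
  c * (S * S) <= 2 * B * E.
Proof.
move=> c0 E0 S0 quad.
have M0 : 0 <= c * S / E by apply: Rmult_le_pos; [nra | apply/Rlt_le/Rinv_0_lt_compat].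
have := quad _ M0.
have -> : 2 * c * (c * S / E) * S - E * (c * S / E * (c * S / E)) = c * (c * (S * S)) / E.
  by field; lra.
move=> h; apply: (Rmult_le_reg_l c) => //.
have -> : c * (c * (S * S)) = E * (c * (c * (S * S)) / E) by field; lra.
have := Rmult_le_compat_l E _ _ (Rlt_le _ _ E0) h; lra.
Qed.

Section PrimalDualIteration.

Variables (d m T : nat) (Rad G D F delta eta : R).
Variables (f : nat -> vec d -> R) (df : nat -> vec d -> vec d).
Variables (g : 'I_m -> vec d -> R) (dg : 'I_m -> vec d -> vec d).
Variables (x : nat -> vec d) (lam : nat -> vec m).

Let feasible (y : vec d) : Prop := forall i, g i y <= 0.
Let Q : R := (INR m + 1) * G ^ 2 + 2 * INR m * D ^ 2.

Let grad_x_lagrangian t : vec d :=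
  fun k => df t (x t) k + \big[Rplus/0]_(i < m) (lam t i * dg i (x t) k).
Let grad_lam_lagrangian t : vec m := fun i => g i (x t) - delta * eta * lam t i.

Hypothesis Rad_ge0 : 0 <= Rad.
Hypothesis eta_gt0 : 0 < eta.
Hypothesis delta_gt0 : 0 < delta.
Hypothesis delta_large : (INR m + 1) * G ^ 2 + 2 * INR m * delta ^ 2 * eta ^ 2 <= delta.
Hypothesis g_convex : forall i, convex (g i).
Hypothesis g_grad : forall i y, is_gradient (g i) y (dg i y).
Hypothesis f_convex : forall t, (1 <= t <= T)%nat -> convex (f t).
Hypothesis f_grad : forall t y, (1 <= t <= T)%nat -> is_gradient (f t) y (df t y).
Hypothesis df_bounded : forall t y, (1 <= t <= T)%nat -> ball Rad y -> norm2 (df t y) <= G.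
Hypothesis dg_bounded : forall i y, ball Rad y -> norm2 (dg i y) <= G.
Hypothesis g_bounded : forall i y, ball Rad y -> Rabs (g i y) <= D.
Hypothesis x_1 : x 1%nat = @vzero d.
Hypothesis lam_1 : lam 1%nat = @vzero m.
Hypothesis x_step : forall t, (1 <= t <= T)%nat ->
  is_proj (ball Rad) (vsub (x t) (vscale eta (grad_x_lagrangian t))) (x t.+1).
Hypothesis lam_step : forall t, (1 <= t <= T)%nat ->
  is_proj (@orthant m) (fun i => lam t i + eta * grad_lam_lagrangian t i) (lam t.+1).

Lemma iterates_in_domain t : (1 <= t <= T.+1)%nat -> ball Rad (x t) /\ orthant (lam t).
Proof.
case: t => [|[|t]] tT; first by lia.
  rewrite x_1 lam_1; split; last by move=> i; rewrite /vzero; lra.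
  by apply: ball_of_sqnorm; rewrite ?sqnorm0; nra.
have tT' : (1 <= t.+1 <= T)%nat by lia.
by split; [exact: (x_step tT').1 | exact: (lam_step tT').1].
Qed.

Lemma delta_absorbs (l : vec m) :
  ((INR m + 1) * G ^ 2 + 2 * (delta * eta) ^ 2) * sqnorm l <= delta * sqnorm l.
Proof.
case: (m =P 0%nat) => [m0 | /eqP m_gt0].
  suff -> : sqnorm l = 0 by lra.
  by rewrite /sqnorm /dot; move: l; rewrite m0 => l; rewrite big_ord0.
apply: Rmult_le_compat_r; first exact: sqnorm_ge0.
have : 1 <= INR m by apply: (le_INR 1); lia.
have := pow2_ge_0 (delta * eta); nra.
Qed.

Lemma lagrangian_grad_sqnorm_le t : (1 <= t <= T)%nat ->
  sqnorm (grad_x_lagrangian t) + sqnorm (grad_lam_lagrangian t) <= Q + delta * sqnorm (lam t).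
Proof.
move=> tT; have [xt _] : ball Rad (x t) /\ orthant (lam t) by apply: iterates_in_domain; lia.
have := sqnorm_lincomb_le (lam t) (sqnorm_le_of_norm2 (df_bounded tT xt)).1
  (fun i => (sqnorm_le_of_norm2 (dg_bounded i xt)).1).
have := @sqnorm_sub_scale_le _ (fun i => g i (x t)) (lam t) (delta * eta) D (fun i => g_bounded i xt).
have := delta_absorbs (lam t).
rewrite /Q /grad_x_lagrangian /grad_lam_lagrangian; lra.
Qed.

Lemma lagrangian_gap_le t z mu : (1 <= t <= T)%nat -> feasible z -> orthant mu ->
  f t (x t) - f t z + \big[Rplus/0]_(i < m) (mu i * g i (x t))
    - delta * eta / 2 * sqnorm mu + delta * eta / 2 * sqnorm (lam t)
  <= dot (grad_x_lagrangian t) (vsub (x t) z) + dot (grad_lam_lagrangian t) (vsub mu (lam t)).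
Proof.
move=> tT zK mu0.
have [_ lam0] : ball Rad (x t) /\ orthant (lam t) by apply: iterates_in_domain; lia.
have primal := convex_gradient_le z (f_convex tT) (f_grad (x t) tT).
rewrite dot_vsubC in primal.
have constraints : \big[Rplus/0]_(i < m) (lam t i * (g i (x t) - g i z))
    <= \big[Rplus/0]_(i < m) (lam t i * dot (dg i (x t)) (vsub (x t) z)).
  apply: big_Rle => i _; have := convex_gradient_le z (g_convex i) (g_grad i (x t)).
  by rewrite dot_vsubC; have := lam0 i; nra.
(* pointwise, the difference is -(delta eta / 2) (mu_i - lam_i)^2 + lam_i g_i(z) <= 0 *)
have dual : \big[Rplus/0]_(i < m) (1 * (mu i * g i (x t)) + (- (delta * eta / 2)) * (mu i * mu i)
                                   + (delta * eta / 2) * (lam t i * lam t i))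
    <= \big[Rplus/0]_(i < m) (lam t i * (g i (x t) - g i z)
                              + grad_lam_lagrangian t i * vsub mu (lam t) i).
  apply: big_Rle => i _; rewrite /grad_lam_lagrangian /vsub.
  have : 0 <= lam t i * - g i z by apply: Rmult_le_pos; [apply: lam0 | have := zK i; lra].
  have : 0 <= delta * eta * ((mu i - lam t i) * (mu i - lam t i)).
    by apply: Rmult_le_pos; [nra | apply: Rle_0_sqr].
  lra.
rewrite big_Rlincomb3 big_split /= in dual.
rewrite dot_lincomb /sqnorm /dot /= in primal constraints dual *; lra.
Qed.

Lemma lagrangian_step t z mu : (1 <= t <= T)%nat -> feasible z -> ball Rad z -> orthant mu ->
  2 * eta * (f t (x t) - f t z + \big[Rplus/0]_(i < m) (mu i * g i (x t))
             - delta * eta / 2 * sqnorm mu)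
  <= sqnorm (vsub (x t) z) + sqnorm (vsub (lam t) mu)
     - (sqnorm (vsub (x t.+1) z) + sqnorm (vsub (lam t.+1) mu)) + eta ^ 2 * Q.
Proof.
move=> tT zK zB mu0.
have primal : sqnorm (vsub (x t.+1) z)
    <= 1 * sqnorm (vsub (x t) z) + (-2 * eta) * dot (grad_x_lagrangian t) (vsub (x t) z)
       + eta ^ 2 * sqnorm (grad_x_lagrangian t).
  apply: (Rle_trans _ _ _ (proj_sqdist_le (@ball_convex d Rad) (x_step tT) zB)); right.
  by rewrite /sqnorm /dot -big_Rlincomb3; apply: eq_bigr => k _; rewrite /vsub /vscale; ring.
have dual : sqnorm (vsub (lam t.+1) mu)
    <= 1 * sqnorm (vsub (lam t) mu) + (-2 * eta) * dot (grad_lam_lagrangian t) (vsub mu (lam t))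
       + eta ^ 2 * sqnorm (grad_lam_lagrangian t).
  apply: (Rle_trans _ _ _ (proj_sqdist_le (@orthant_convex m) (lam_step tT) mu0)); right.
  by rewrite /sqnorm /dot -big_Rlincomb3; apply: eq_bigr => k _; rewrite /vsub; ring.
have := Rmult_le_compat_l (2 * eta) _ _ ltac:(lra) (lagrangian_gap_le tT zK mu0).
have := Rmult_le_compat_l (eta ^ 2) _ _ (pow2_ge_0 eta) (lagrangian_grad_sqnorm_le tT).
lra.
Qed.

Lemma lagrangian_telescope n z mu : (n <= T)%nat -> feasible z -> ball Rad z -> orthant mu ->
  2 * eta * (sumT n (fun t => f t (x t) - f t z)
             + \big[Rplus/0]_(i < m) (mu i * sumT n (fun t => g i (x t)))
             - INR n * (delta * eta / 2) * sqnorm mu)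
  <= sqnorm (vsub (x 1%nat) z) + sqnorm (vsub (lam 1%nat) mu)
     - (sqnorm (vsub (x n.+1) z) + sqnorm (vsub (lam n.+1) mu)) + INR n * (eta ^ 2 * Q).
Proof.
move=> + zK zB mu0; elim: n => [_ | n IHn nT].
  by rewrite sumT0 big1 => [/= | i _]; [lra | rewrite sumT0; ring].
have step := lagrangian_step (t := n.+1) ltac:(lia) zK zB mu0.
have IH := IHn ltac:(lia).
rewrite sumT_recr S_INR.
under eq_bigr => i _ do rewrite sumT_recr Rmult_plus_distr_l.
rewrite /= in IH step; rewrite big_split /=; lra.
Qed.

Lemma lagrangian_sum_le z mu : feasible z -> ball Rad z -> orthant mu ->
  2 * eta * (sumT T (fun t => f t (x t) - f t z)
             + \big[Rplus/0]_(i < m) (mu i * sumT T (fun t => g i (x t)))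
             - INR T * (delta * eta / 2) * sqnorm mu)
  <= Rad ^ 2 + sqnorm mu + INR T * (eta ^ 2 * Q).
Proof.
move=> zK zB mu0; have := lagrangian_telescope (leqnn T) zK zB mu0.
rewrite x_1 lam_1 !sqnorm_vsub0l.
have := sqnorm_ge0 (vsub (x T.+1) z); have := sqnorm_ge0 (vsub (lam T.+1) mu).
have := (sqnorm_le_of_norm2 zB).1; lra.
Qed.
Variable a : R.
Hypothesis a_gt0 : 0 < a.
Hypothesis a_sqr : a * a = Rad ^ 2 * Q.
Hypothesis T_gt0 : (0 < T)%nat.
Hypothesis eta_tuned : eta * (a * sqrt (INR T)) = Rad ^ 2.
Hypothesis f_range : forall t y z, (1 <= t <= T)%nat -> ball Rad y -> ball Rad z ->
  f t y - f t z <= F.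

Lemma step_size_balance : Rad ^ 2 + INR T * (eta ^ 2 * Q) = 2 * eta * (a * sqrt (INR T)).
Proof.
have T_pos : 0 < INR T by apply: lt_0_INR; apply/ltP.
have Rad2_pos : 0 < Rad ^ 2.
  by rewrite -eta_tuned; do 2 apply: Rmult_lt_0_compat => //; exact: sqrt_lt_R0.
have : INR T * (eta ^ 2 * Q) * Rad ^ 2 = (eta * (a * sqrt (INR T))) ^ 2.
  transitivity (sqrt (INR T) * sqrt (INR T) * eta ^ 2 * (Rad ^ 2 * Q)).
    by rewrite (sqrt_sqrt _ (pos_INR T)); ring.
  by rewrite -a_sqr; ring.
rewrite eta_tuned => /= TQ.
have : INR T * (eta ^ 2 * Q) = Rad ^ 2 by apply: (Rmult_eq_reg_r (Rad ^ 2)); lra.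
lra.
Qed.

Lemma regret_le z : feasible z -> ball Rad z ->
  sumT T (fun t => f t (x t) - f t z) <= a * sqrt (INR T).
Proof.
move=> zK zB; have := lagrangian_sum_le zK zB (fun i => Rle_refl 0 : 0 <= @vzero m i).
rewrite sqnorm0 big1 => [|i _]; last by rewrite /vzero; ring.
have := step_size_balance => balance sum_le.
by apply: (Rmult_le_reg_l (2 * eta)); lra.
Qed.

Lemma violation_le z i : feasible z -> ball Rad z ->
  sumT T (fun t => g i (x t))
  <= sqrt (2 * (F * INR T + a * sqrt (INR T)) * sqrt (INR T)
           * (delta * Rad ^ 2 / a + INR m * a / Rad ^ 2)).
Proof.
move=> zK zB.
set S := sumT T (fun t => g i (x t)); set B := F * INR T + a * sqrt (INR T).
case: (Rle_lt_dec S 0) => [S_le0 | S_gt0]; first exact: Rle_trans S_le0 (sqrt_pos _).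
set E := INR T * delta * eta ^ 2 + 1.
have E_gt0 : 0 < E.
  suff : 0 <= INR T * delta * eta ^ 2 by rewrite /E; lra.
  by apply: Rmult_le_pos; [apply: Rmult_le_pos; [exact: pos_INR | lra] | exact: pow2_ge_0].
have regret_ge : INR T * - F <= sumT T (fun t => f t (x t) - f t z).
  apply: sumT_ge => t tT.
  have [xt _] : ball Rad (x t) /\ orthant (lam t) by apply: iterates_in_domain; lia.
  by have := f_range tT zB xt; lra.
have quad M : 0 <= M -> 2 * eta * M * S - E * (M * M) <= 2 * eta * B.
  move=> M0; pose mu j := if j == i then M else 0.
  have mu0 : orthant mu by move=> j; rewrite /mu; case: (j == i); lra.
  have mu_sqnorm : sqnorm mu = M * M.
    rewrite /sqnorm /dot (bigD1 i) //= big1 => [|j ji]; first by rewrite /mu eqxx; ring.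
    by rewrite /mu (negbTE ji); ring.
  have mu_S : \big[Rplus/0]_(j < m) (mu j * sumT T (fun t => g j (x t))) = M * S.
    rewrite (bigD1 i) //= big1 => [|j ji]; first by rewrite /mu eqxx /= -/S; ring.
    by rewrite /mu (negbTE ji); ring.
  have := lagrangian_sum_le zK zB mu0; rewrite mu_sqnorm mu_S.
  have := Rmult_le_compat_l (2 * eta) _ _ ltac:(lra) regret_ge.
  have := step_size_balance; rewrite /E /B; lra.
have := sqr_le_of_quadratic_le eta_gt0 E_gt0 (Rlt_le _ _ S_gt0) quad => S_sqr.
have B_gt0 : 0 < B.
  have : 0 < eta * (S * S) by apply: Rmult_lt_0_compat => //; nra.
  nra.
have m_ge1 : 1 <= INR m by apply: (le_INR 1); have := ltn_ord i; lia.
have tuned := eta_tuned; set st := sqrt (INR T) in tuned *.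
have st_gt0 : 0 < st by apply: sqrt_lt_R0; apply: lt_0_INR; apply/ltP.
have bound_eq : eta * (2 * B * st * (delta * Rad ^ 2 / a + INR m * a / Rad ^ 2))
    = 2 * B * (INR T * delta * eta ^ 2 + INR m).
  rewrite -tuned -(sqrt_sqrt _ (pos_INR T)) -/st; field; lra.
rewrite -(sqrt_square S); last lra.
apply: sqrt_le_1_alt; apply: (Rmult_le_reg_l eta) => //; rewrite bound_eq.
by apply: (Rle_trans _ _ _ S_sqr); apply: Rmult_le_compat_l; rewrite /E; lra.
Qed.

End PrimalDualIteration.

Theorem mainTheorem11
  (d m T : nat) (Rad G D F delta : R)
  (f : nat -> vec d -> R) (df : nat -> vec d -> vec d)
  (g : 'I_m -> vec d -> R) (dg : 'I_m -> vec d -> vec d)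
  (x : nat -> vec d) (lam : nat -> vec m) (xs : vec d) :
  let K := fun y : vec d => forall i : 'I_m, g i y <= 0 in
  let a := Rad * sqrt ((INR m + 1) * G ^ 2 + 2 * INR m * D ^ 2) in
  let eta := Rad ^ 2 / (a * sqrt (INR T)) in
  (forall i, convex (g i)) ->
  (forall i y, is_gradient (g i) y (dg i y)) ->
  (forall y, K y -> ball Rad y) ->
  (exists y, K y) ->
  (forall t, (1 <= t <= T)%nat -> convex (f t)) ->
  (forall t y, (1 <= t <= T)%nat -> is_gradient (f t) y (df t y)) ->
  (forall t y, (1 <= t <= T)%nat -> ball Rad y -> norm2 (df t y) <= G) ->
  (forall i y, ball Rad y -> norm2 (dg i y) <= G) ->
  (forall i y, ball Rad y -> Rabs (g i y) <= D) ->
  (forall t y z, (1 <= t <= T)%nat -> ball Rad y -> ball Rad z -> f t y - f t z <= F) ->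
  0 < a ->
  2 * sqrt 2 * eta * (INR m + 1) <= 1 ->
  0 < delta ->
  (INR m + 1) * G ^ 2 + 2 * INR m * delta ^ 2 * eta ^ 2 <= delta ->
  x 1%nat = @vzero d ->
  lam 1%nat = @vzero m ->
  (forall t, (1 <= t <= T)%nat ->
     is_proj (ball Rad)
       (vsub (x t)
          (vscale eta (fun k => df t (x t) k
                         + \big[Rplus/0]_(i < m) (lam t i * dg i (x t) k))))
       (x t.+1)) ->
  (forall t, (1 <= t <= T)%nat ->
     is_proj (@orthant m)
       (fun i => lam t i + eta * (g i (x t) - delta * eta * lam t i))
       (lam t.+1)) ->
  K xs ->
  (forall y, K y -> sumT T (fun t => f t xs) <= sumT T (fun t => f t y)) ->
  sumT T (fun t => f t (x t) - f t xs) <= a * sqrt (INR T) /\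
  (forall i : 'I_m,
     sumT T (fun t => g i (x t)) <=
     sqrt (2 * (F * INR T + a * sqrt (INR T)) * sqrt (INR T)
           * (delta * Rad ^ 2 / a + INR m * a / Rad ^ 2))).
Proof.
move=> K a eta g_convex g_grad K_ball [y0 Ky0] f_convex f_grad df_bounded dg_bounded
  g_bounded f_range a_gt0 _ delta_gt0 delta_large x_1 lam_1 x_step lam_step Kxs _.
have Rad_ge0 : 0 <= Rad := (sqnorm_le_of_norm2 (K_ball _ Ky0)).2.
case: (posnP T) => [T0 | T_gt0].
  rewrite T0 !sumT0 /= sqrt_0 Rmult_0_r.
  by split=> [|i]; [lra | rewrite sumT0; exact: sqrt_pos].
have sqrtT_gt0 : 0 < sqrt (INR T) by apply: sqrt_lt_R0; apply: lt_0_INR; apply/ltP.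
set Q := (INR m + 1) * G ^ 2 + 2 * INR m * D ^ 2.
have Q_ge0 : 0 <= Q by rewrite /Q; have := pos_INR m; have := pow2_ge_0 G; have := pow2_ge_0 D; nra.
have a_sqr : a * a = Rad ^ 2 * Q.
  by rewrite /a -/Q; transitivity (Rad ^ 2 * (sqrt Q * sqrt Q)); [ring | rewrite sqrt_sqrt].
have Rad_gt0 : 0 < Rad by case: Rad_ge0 => // Rad0; move: a_gt0; rewrite /a -Rad0; lra.
have eta_gt0 : 0 < eta by apply: Rdiv_lt_0_compat; nra.
have eta_tuned : eta * (a * sqrt (INR T)) = Rad ^ 2 by rewrite /eta; field; lra.
split=> [|i].
  exact: (regret_le Rad_ge0 eta_gt0 delta_gt0 delta_large g_convex g_grad f_convex f_grad
    df_bounded dg_bounded g_bounded x_1 lam_1 x_step lam_step a_gt0 a_sqr T_gt0 eta_tuned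
    Kxs (K_ball _ Kxs)).
exact: (violation_le Rad_ge0 eta_gt0 delta_gt0 delta_large g_convex g_grad f_convex f_grad
  df_bounded dg_bounded g_bounded x_1 lam_1 x_step lam_step a_gt0 a_sqr T_gt0 eta_tuned
  f_range i Kxs (K_ball _ Kxs)).
Qed.
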